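(* Let $\mathbb{K}$ be an algebraically closed field of characteristic zero and let $Y,Z$ be irreducible affine varieties with $Y\times\mathbb{A}^1\cong Z\times\mathbb{A}^1$. Then $Y$ and $Z$ are of the same type (A, B or C).
   Context: A derivation of $\mathbb{K}[X]$ is locally nilpotent (LND) if every element is killed by some power of it; a slice of an LND $\partial$ is $s$ with $\partial(s)=1$. $\mathrm{HD}^*(X)$ is the subalgebra of $\mathbb{K}[X]$ generated by the kernels of all LNDs of $\mathbb{K}[X]$ having a slice. A variety $Y$ is rigid if $\mathbb{K}[Y]$ has no nonzero LND. For an irreducible affine variety $Y$ with $X=Y\times\mathbb{A}^1$, $\mathbb{K}[X]=\mathbb{K}[Y][u]$: $Y$ is of type A if $\mathrm{HD}^*(X)=\mathbb{K}[X]$; of type B if $\mathrm{HD}^*(X)$ is not finitely generated; of type C if $Y$ is rigid and $\mathrm{HD}^*(X)=\mathbb{K}[Y]$. Every such $Y$ is of exactly one of these types. *)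

From HB Require Import structures.
From mathcomp Require Import all_boot all_order all_algebra.
Set Implicit Arguments. Unset Strict Implicit. Unset Printing Implicit Defensive.
Import GRing.Theory.
Local Open Scope ring_scope.

(* A commutative ring R together with a structure map c : K -> R
   (the embedding of the ground field). *)
Section Generic.
Variables (K : fieldType) (R : comNzRingType) (c : K -> R).

(* K-derivation: additive, Leibniz rule, kills the constants of K
   (hence K-linear). *)
Definition is_Kderivation (D : R -> R) : Prop :=
  (forall x y, D (x + y) = D x + D y) /\
  (forall x y, D (x * y) = x * D y + D x * y) /\
  (forall k, D (c k) = 0).

Definition is_LND (D : R -> R) : Prop :=
  is_Kderivation D /\ forall x, exists n : nat, iter n D x = 0.

Inductive gen_subalg (S : R -> Prop) : R -> Prop :=
| gen_in x : S x -> gen_subalg S x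
| gen_cst k : gen_subalg S (c k)
| gen_add x y : gen_subalg S x -> gen_subalg S y -> gen_subalg S (x + y)
| gen_mul x y : gen_subalg S x -> gen_subalg S y -> gen_subalg S (x * y).

Definition fin_gen (S : R -> Prop) : Prop :=
  exists s : seq R, (forall x, x \in s -> S x) /\
    (forall x, S x <-> gen_subalg (fun y => y \in s) x).

Definition HDstar : R -> Prop :=
  gen_subalg (fun y => exists D, is_LND D /\ (exists s, D s = 1) /\ D y = 0).

Definition rigid : Prop := forall D, is_LND D -> forall x, D x = 0.
End Generic.

Section Varieties.
Variable K : fieldType.

(* coordinate ring of an irreducible affine variety:
   finitely generated K-algebra that is an integral domain *)
Definition affine_domain (A : comAlgType K) : Prop :=
  (forall a b : A, a * b = 0 -> a = 0 \/ b = 0) /\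
  exists s : seq A, forall x, gen_subalg (fun k : K => k%:A) (fun y => y \in s) x.

(* K[X] = K[Y][u] with structure map k |-> (k%:A)%:P *)
Definition cst_poly (A : comAlgType K) (k : K) : {poly A} := (k%:A)%:P.

Definition typeA (A : comAlgType K) : Prop :=
  forall p : {poly A}, HDstar (@cst_poly A) p.

Definition typeB (A : comAlgType K) : Prop :=
  ~ fin_gen (@cst_poly A) (HDstar (@cst_poly A)).

Definition typeC (A : comAlgType K) : Prop :=
  rigid (fun k : K => k%:A : A) /\
  (forall p : {poly A}, HDstar (@cst_poly A) p <-> exists a : A, p = a%:P).

(* K-algebra isomorphism K[Y][u] ~= K[Z][u]
   (i.e. Y x A^1 ~= Z x A^1) *)
Definition Kalg_iso (A B : comAlgType K) (f : {poly A} -> {poly B}) : Prop :=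
  bijective f /\
  (forall p q, f (p + q) = f p + f q) /\
  (forall p q, f (p * q) = f p * f q) /\
  f 1 = 1 /\
  (forall k : K, f (cst_poly A k) = cst_poly B k).
End Varieties.

From HB Require Import structures.
From mathcomp Require Import all_boot all_order all_algebra zify.
Set Implicit Arguments. Unset Strict Implicit. Unset Printing Implicit Defensive.
Import GRing.Theory.
Local Open Scope ring_scope.

(* The subalgebra HD* is defined intrinsically from the K-algebra structure,
   so a K-algebra isomorphism K[Y][u] ~= K[Z][u] carries HD* onto HD*; this
   settles types A and B.  For type C, HD*(K[Y][u]) = K[Y] forces the inverse
   isomorphism g to send K[Z] into K[Y], so g acts by applying its restriction
   to K[Z] coefficientwise and then substituting the nonconstant polynomial
   g(u).  A degree count in the domain K[Y] then shows that the isomorphism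
   itself sends K[Y] into K[Z]; the two restrictions are mutually inverse
   isomorphisms K[Y] ~= K[Z], and these transport rigidity. *)

Section RingIsomorphisms.
Variable K : fieldType.

Record Kring_iso (R S : comNzRingType) (cR : K -> R) (cS : K -> S)
    (f : R -> S) (g : S -> R) : Prop := KringIso {
  iso_fK : cancel f g;
  iso_gK : cancel g f;
  iso_add : {morph f : x y / x + y};
  iso_mul : {morph f : x y / x * y};
  iso_one : f 1 = 1;
  iso_cst : forall k, f (cR k) = cS k }.

Lemma morph_add0 (U V : zmodType) (h : U -> V) :
  {morph h : x y / x + y} -> h 0 = 0.
Proof. by move=> hD; apply: (addrI (h 0)); rewrite -hD !addr0. Qed.

Lemma Kring_isoV (R S : comNzRingType) (cR : K -> R) (cS : K -> S) f g :
  Kring_iso cR cS f g -> Kring_iso cS cR g f.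
Proof.
case=> fK gK fD fM f1 fC; split=> // [x y|x y||k]; apply: (can_inj fK).
- by rewrite fD !gK.
- by rewrite fM !gK.
- by rewrite f1 gK.
- by rewrite fC gK.
Qed.

Lemma Kalg_isoP (A B : comAlgType K) (f : {poly A} -> {poly B}) :
  Kalg_iso f -> exists g, Kring_iso (@cst_poly K A) (@cst_poly K B) f g.
Proof. by case=> -[g fK gK] [fD [fM [f1 fC]]]; exists g. Qed.

Lemma gen_subalg_morph (R S : comNzRingType) (cR : K -> R) (cS : K -> S)
    (f : R -> S) (P : R -> Prop) (Q : S -> Prop) :
  {morph f : x y / x + y} -> {morph f : x y / x * y} ->
  (forall k, f (cR k) = cS k) -> (forall x, P x -> Q (f x)) ->
  forall x, gen_subalg cR P x -> gen_subalg cS Q (f x).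
Proof.
move=> fD fM fC PQ x; elim=> {x} [x /PQ|k|x y _ hx _ hy|x y _ hx _ hy].
- exact: gen_in.
- by rewrite fC; apply: gen_cst.
- by rewrite fD; apply: gen_add.
- by rewrite fM; apply: gen_mul.
Qed.

Section Transport.
Variables (R S : comNzRingType) (cR : K -> R) (cS : K -> S) (f : R -> S) (g : S -> R).
Hypothesis fg : Kring_iso cR cS f g.

Lemma is_LND_conj D : is_LND cR D -> is_LND cS (f \o D \o g).
Proof.
case: fg (Kring_isoV fg) => fK gK fD fM _ fC [_ _ gD gM _ gC].
move=> [[DD [DM DC]] Dnil]; split; [split; [|split] |] => [x y|x y|k|x].
- by rewrite /= gD DD fD.
- by rewrite /= gM DM fD !fM !gK.
- by rewrite /= gC DC (morph_add0 fD).
have [n Dn] := Dnil (g x); exists n.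
have -> : iter n (f \o D \o g) x = f (iter n D (g x)).
  by elim: n {Dn} => [|n /= ->]; rewrite ?gK //= fK.
by rewrite Dn (morph_add0 fD).
Qed.

Lemma HDstar_transport x : HDstar cR x -> HDstar cS (f x).
Proof.
case: fg => fK gK fD fM f1 fC.
apply: gen_subalg_morph => // y [D [LND_D [[s Ds] Dy]]].
exists (f \o D \o g); split; first exact: is_LND_conj.
by split; [exists (f s) | ]; rewrite /= fK ?Ds ?Dy ?(morph_add0 fD).
Qed.

Lemma rigid_transport : rigid cS -> rigid cR.
Proof.
move=> rigidS D /is_LND_conj /rigidS Dconj x; case: fg => fK _ fD _ _ _.
by apply: (can_inj fK); rewrite -[x]fK (morph_add0 fD); apply: Dconj.
Qed.

End Transport.

Lemma fin_gen_HDstar_transport (R S : comNzRingType) (cR : K -> R) (cS : K -> S) f g :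
  Kring_iso cR cS f g -> fin_gen cR (HDstar cR) -> fin_gen cS (HDstar cS).
Proof.
move=> fg [s [sHD HDs]]; have gf := Kring_isoV fg.
exists (map f s); split=> [_ /mapP[y ys ->]|x]; first exact/(HDstar_transport fg)/sHD.
split=> [HDx|Hx]; rewrite -(iso_gK fg x).
- have /HDs Hgx := HDstar_transport gf HDx.
  apply: (gen_subalg_morph (iso_add fg) (iso_mul fg) (iso_cst fg) _ Hgx) => y.
  exact: map_f.
- apply: (HDstar_transport fg); apply/HDs.
  apply: (gen_subalg_morph (iso_add gf) (iso_mul gf) (iso_cst gf) _ Hx).
  by move=> _ /mapP[y ys ->]; rewrite (iso_fK fg).
Qed.

End RingIsomorphisms.

Lemma size_poly_leq_comp (R : nzSemiRingType)
    (R_domain : forall a b : R, a * b = 0 -> a = 0 \/ b = 0) (p q : {poly R}) :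
  (1 < size q)%N -> (size p <= size (p \Po q))%N.
Proof.
move=> q_gt1; elim/poly_ind: p => [|p c IHp]; first by rewrite size_poly0.
rewrite comp_poly_MXaddC size_MXaddC.
have [->|p_neq0] := eqVneq p 0.
  by rewrite comp_poly0 mul0r add0r size_polyC size_poly0; case: (c == 0).
rewrite andFb; have pq_gt0 : (0 < size (p \Po q))%N.
  by apply: leq_trans IHp; rewrite size_poly_gt0.
have size_pqq : size ((p \Po q) * q) = (size (p \Po q) + size q).-1.
  apply: size_proper_mul; apply/eqP => /R_domain[]/eqP; rewrite lead_coef_eq0.
    by rewrite -size_poly_eq0 => /eqP pq0; rewrite pq0 in pq_gt0.
  by rewrite -size_poly_eq0 => /eqP q0; rewrite q0 in q_gt1.
rewrite size_polyDl size_pqq; last first.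
  by rewrite (leq_ltn_trans (size_polyC_leq1 c)) //; lia.
lia.
Qed.

Section PolynomialRings.
Variable K : fieldType.

Lemma deriv_is_LND (R : comNzRingType) (c : K -> R) :
  is_LND (fun k => (c k)%:P) (@deriv R).
Proof.
split; last by move=> p; exists (size p); apply: derivn_poly0.
split; [exact: derivD | split=> [p q|k]].
- by rewrite derivM addrC.
- exact: derivC.
Qed.

Lemma polyC_HDstar (R : comNzRingType) (c : K -> R) (a : R) :
  HDstar (fun k => (c k)%:P) a%:P.
Proof.
apply: gen_in; exists (@deriv R); split; first exact: deriv_is_LND.
by split; [exists 'X; rewrite derivX | rewrite derivC].
Qed.

End PolynomialRings.

Lemma morph_polyE (R S : comNzRingType) (g : {poly R} -> {poly S}) (psi : R -> S) :
  {morph g : p q / p + q} -> {morph g : p q / p * q} ->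
  (forall a, g a%:P = (psi a)%:P) -> forall p, g p = map_poly psi p \Po g 'X.
Proof.
move=> gD gM gC; have psi0 : psi 0 = 0.
  by apply: polyC_inj; rewrite -gC (morph_add0 gD).
elim/poly_ind => [|p c IHp]; first by rewrite map_poly0 comp_poly0 (morph_add0 gD).
have -> : map_poly psi (p * 'X + c%:P) = map_poly psi p * 'X + (psi c)%:P.
  apply/polyP=> i; rewrite coef_map_id0 // !coefD !coefMX !coefC coef_map_id0 //.
  by case: i => [|i] /=; rewrite ?add0r ?addr0.
by rewrite comp_poly_MXaddC gD gM gC IHp.
Qed.

Definition maps_polyC (R S : nzSemiRingType) (h : {poly R} -> {poly S}) : Prop :=
  forall a : R, exists b : S, h a%:P = b%:P.

Lemma maps_polyCE (R S : nzSemiRingType) (h : {poly R} -> {poly S}) :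
  maps_polyC h -> forall a, h a%:P = ((h a%:P)`_0)%:P.
Proof. by move=> hC a; have [b ->] := hC a; rewrite coefC. Qed.

Lemma maps_polyC_inverse (R S : comNzRingType)
    (R_domain : forall a b : R, a * b = 0 -> a = 0 \/ b = 0)
    (f : {poly R} -> {poly S}) (g : {poly S} -> {poly R}) :
  cancel f g -> cancel g f -> {morph g : p q / p + q} -> {morph g : p q / p * q} ->
  maps_polyC g -> maps_polyC f.
Proof.
move=> fK gK gD gM /maps_polyCE gC a.
set psi := fun b => (g b%:P)`_0; have g0 := morph_add0 gD.
have psi0 : psi 0 = 0 by rewrite /psi g0 coef0.
have gE := morph_polyE gD gM gC; set v := g 'X in gE.
have v_gt1 : (1 < size v)%N.
  rewrite ltnNge; apply/negP => /size1_polyC v_const.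
  have := size_polyX R; rewrite -(fK 'X) gE v_const comp_polyCr size_polyC.
  by case: (_ != 0).
set p := f a%:P.
have psi_p_const : (size (map_poly psi p) <= 1)%N.
  apply: leq_trans (size_poly_leq_comp R_domain _ v_gt1) _.
  by rewrite -gE /p fK size_polyC leq_b1.
exists p`_0; apply/polyP => i; rewrite coefC; case: eqP => [->//|/eqP i_neq0].
have : (map_poly psi p)`_i = 0 by rewrite nth_default // (leq_trans psi_p_const) // lt0n.
rewrite coef_map_id0 // => psi_pi.
by apply/polyC_inj/(can_inj gK); rewrite gC -/(psi _) psi_pi polyC0 g0.
Qed.

Lemma Kring_iso_polyC (K : fieldType) (R S : comNzRingType) (cR : K -> R) (cS : K -> S)
    (f : {poly R} -> {poly S}) (g : {poly S} -> {poly R}) :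
  Kring_iso (fun k => (cR k)%:P) (fun k => (cS k)%:P) f g ->
  maps_polyC f -> maps_polyC g ->
  Kring_iso cR cS (fun a => (f a%:P)`_0) (fun b => (g b%:P)`_0).
Proof.
move=> fg f_polyC g_polyC.
have fC a : f a%:P = ((f a%:P)`_0)%:P by apply: maps_polyCE.
have gC b : g b%:P = ((g b%:P)`_0)%:P by apply: maps_polyCE.
split=> [a|b|a a'|a a'||k]; apply: polyC_inj.
- by rewrite -gC -fC (iso_fK fg).
- by rewrite -fC -gC (iso_gK fg).
- by rewrite [RHS]polyCD -!fC -(iso_add fg) -polyCD.
- by rewrite [RHS]polyCM -!fC -(iso_mul fg) -polyCM.
- by rewrite -fC (iso_one fg).
- by rewrite -fC (iso_cst fg).
Qed.

Section Types.
Variables (K : fieldType) (A B : comAlgType K).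
Variables (f : {poly A} -> {poly B}) (g : {poly B} -> {poly A}).
Hypothesis fg : Kring_iso (@cst_poly K A) (@cst_poly K B) f g.

Lemma typeA_transport : typeA A -> typeA B.
Proof. by move=> HDA p; rewrite -(iso_gK fg p); apply: (HDstar_transport fg). Qed.

Lemma typeB_transport : typeB A -> typeB B.
Proof. by move=> not_fin_genA /(fin_gen_HDstar_transport (Kring_isoV fg)). Qed.

Lemma typeC_transport :
  (forall a b : A, a * b = 0 -> a = 0 \/ b = 0) -> typeC A -> typeC B.
Proof.
move=> A_domain [rigidA HDA]; have gf := Kring_isoV fg.
have gC : maps_polyC g.
  move=> b; have /HDA[a ga] := HDstar_transport gf (polyC_HDstar (fun k => k%:A) b).
  by exists a.
have fC : maps_polyC f.
  apply: (maps_polyC_inverse A_domain (iso_fK fg) (iso_gK fg) _ _ gC).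
  - exact: (iso_add gf).
  - exact: (iso_mul gf).
split; first exact: rigid_transport (Kring_isoV (Kring_iso_polyC fg fC gC)) rigidA.
move=> p; split=> [/(HDstar_transport gf)/HDA[a ga]|[b ->]]; last exact: polyC_HDstar.
by exists (f a%:P)`_0; rewrite -(maps_polyCE fC) -ga (iso_gK fg).
Qed.

End Types.

Theorem corollary3 (K : closedFieldType) (hK : [pchar K] =i pred0)
  (A B : comAlgType K) (hA : affine_domain A) (hB : affine_domain B)
  (f : {poly A} -> {poly B}) (hf : Kalg_iso f) :
  (typeA A <-> typeA B) /\ (typeB A <-> typeB B) /\ (typeC A <-> typeC B).
Proof.
have [g fg] := Kalg_isoP hf; have gf := Kring_isoV fg.
split; [|split]; split.
- exact: typeA_transport fg.
- exact: typeA_transport gf.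
- exact: typeB_transport fg.
- exact: typeB_transport gf.
- exact: typeC_transport fg hA.1.
- exact: typeC_transport gf hB.1.
Qed.
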